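(* In the fixing phase described in the context, the expected regret accumulated by the whole system during the fixing phase is upper bounded by $$K^2M\exp\left(\frac{K-1}{M-1}\right).$$
   Context: There are $K$ users and $M\ge2$ channels, slotted synchronized time, no communication. A user on channel $m$ together with $n-1$ other users gets a reward in $[0,1]$ with mean $\mu(m,n)$ (the same for all users), so the regret incurred by a user in one slot is at most $1$. $f^\ast=(f^\ast(1),\dots,f^\ast(M))$ is a maximizer of $\sum_{i}f(i)\mu(i,f(i))$ over nonnegative integer vectors with $\sum_i f(i)=K$ (the optimal number of users per channel). Fixing phase (procedure Alloc): in every slot, each user that is not yet fixed picks a channel uniformly at random among the $M$ channels; if the number of users on the chosen channel $a$ in that slot is such that $\mu(a,f(a))\ge\mu(a,f^\ast(a))$ (i.e. at most $f^\ast(a)$ users are on it), the user becomes fixed on $a$ and chooses $a$ in all later slots of the phase. The fixing phase lasts until all users are fixed; regret is incurred during it. *)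

From HB Require Import structures.
From mathcomp Require Import all_boot all_order all_algebra.
Set Implicit Arguments. Unset Strict Implicit. Unset Printing Implicit Defensive.
Import Order.TTheory GRing.Theory Num.Theory.
Local Open Scope ring_scope.

(* A state of the fixing phase: for each user, [Some a] if it is fixed on
   channel a, [None] if not yet fixed. *)
Definition state (K M : nat) := {ffun 'I_K -> option 'I_M}.

(* One slot of randomness: every user draws a channel uniformly at random;
   fixed users ignore their draw (equivalent in law to only unfixed users
   drawing). *)
Definition draw (K M : nat) := {ffun 'I_K -> 'I_M}.

Definition pos K M (s : state K M) (c : draw K M) (k : 'I_K) : 'I_M :=
  if s k is Some a then a else c k.

Definition load K M (s : state K M) (c : draw K M) (a : 'I_M) : nat :=
  #|[set k | pos s c k == a]|.

Definition step K M (fstar : 'I_M -> nat) (s : state K M) (c : draw K M)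
  : state K M :=
  [ffun k => if s k is Some a then Some a
             else if (load s c (c k) <= fstar (c k))%N then Some (c k) else None].

Definition all_fixed K M (s : state K M) : bool := [forall k, s k != None].

Definition init_state K M : state K M := [ffun _ => None].

Definition opt_reward (R : numFieldType) M (mu : 'I_M -> nat -> R)
  (fstar : 'I_M -> nat) : R :=
  \sum_(a < M) (fstar a)%:R * mu a (fstar a).

Definition slot_regret (R : numFieldType) K M (mu : 'I_M -> nat -> R)
  (fstar : 'I_M -> nat) (s : state K M) (c : draw K M) : R :=
  opt_reward mu fstar - \sum_(a < M) (load s c a)%:R * mu a (load s c a).

(* expected regret accumulated by the system during the first N slots of the
   fixing phase, started from state s (no regret once all users are fixed,
   i.e. once the phase has ended). *)
Fixpoint exp_regret (R : numFieldType) K M (mu : 'I_M -> nat -> R)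
  (fstar : 'I_M -> nat) (N : nat) (s : state K M) : R :=
  match N with
  | 0 => 0
  | N'.+1 =>
      if all_fixed s then 0
      else (M%:R ^+ K)^-1 *
           \sum_(c : draw K M)
              (slot_regret mu fstar s c + exp_regret mu fstar N' (step fstar s c))
  end.

From HB Require Import structures.
From mathcomp Require Import all_boot all_order all_algebra.
From mathcomp Require Import all_classical all_reals all_analysis.
From mathcomp Require Import ring lra zify.
Import Order.TTheory GRing.Theory Num.Theory.
Set Implicit Arguments. Unset Strict Implicit. Unset Printing Implicit Defensive.
Local Open Scope ring_scope.

(** Fixed users never exceed the quota [fstar a] of their channel, and since
    [\sum_a fstar a = K], as long as some user [k0] is unfixed some channel
    [a0] still has room.  In every slot, with probability at least
    [p = (M-1)^(K-1) / M^K], user [k0] is the only one drawing [a0] and gets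
    fixed, so the expected number of unfixed users drops by [p] per slot.
    A slot costs at most [K], hence the expected regret from a state with
    [u] unfixed users is at most [K u / p]; for [u = K] this is
    [K^2 M (1 + 1/(M-1))^(K-1) <= K^2 M exp((K-1)/(M-1))]. *)

Section FixingPhase.
Variables (K M : nat) (fstar : 'I_M -> nat).

Definition unfixed (s : state K M) : {set 'I_K} := [set k | s k == None].

Definition fixed_on (s : state K M) (a : 'I_M) : {set 'I_K} :=
  [set k | s k == Some a].

Definition within_quota (s : state K M) : Prop :=
  forall a, (#|fixed_on s a| <= fstar a)%N.

Definition lone_draws (k0 : 'I_K) (a0 : 'I_M) : {set draw K M} :=
  [set c : draw K M | [forall j, (c j == a0) == (j == k0)]].

Lemma card_lone_draws k0 a0 : #|lone_draws k0 a0| = (M.-1 ^ K.-1)%N.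
Proof.
pose F := fun j : 'I_K => if j == k0 then pred1 a0 else predC1 a0.
have -> : #|lone_draws k0 a0| = #|(family F : simpl_pred (draw K M))|.
  apply: eq_card => c; rewrite inE.
  by apply/forallP/familyP => H j; have := H j; rewrite /F;
    case: (j == k0); rewrite /= ?inE; case: (c j == a0).
rewrite card_family foldrE big_map big_enum /= (bigD1 k0) //= /F eqxx card1.
rewrite (eq_bigr (fun _ => M.-1)) => [|j /negbTE ->]; last by rewrite cardC1 card_ord.
by rewrite prod_nat_const mul1n cardC1 card_ord.
Qed.

Lemma unfixed_init : unfixed (init_state K M) = [set: 'I_K].
Proof. by apply/setP => k; rewrite !inE ffunE. Qed.

Lemma within_quota_init : within_quota (init_state K M).
Proof. by move=> a; rewrite eq_card0 // => k; rewrite !inE ffunE. Qed.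

Lemma within_quota_step s c : within_quota s -> within_quota (step fstar s c).
Proof.
move=> quota_s a; case: (leqP (load s c a) (fstar a)) => load_a.
  apply: leq_trans load_a; apply/subset_leq_card/fintype.subsetP => k.
  rewrite !inE /step ffunE /pos; case: (s k) => [b|] //.
  by case: ifP => // _ /eqP [->].
apply: leq_trans (quota_s a); apply/subset_leq_card/fintype.subsetP => k.
rewrite !inE /step ffunE; case: (s k) => [b|] //.
by case: ifP => // + /eqP [ck]; rewrite ck leqNgt load_a.
Qed.

Lemma unfixed_step_sub s c : unfixed (step fstar s c) \subset unfixed s.
Proof. by apply/fintype.subsetP => k; rewrite !inE /step ffunE; case: (s k). Qed.

Lemma sum_card_fixed_on s :
  (\sum_a #|fixed_on s a| + #|unfixed s|)%N = K.
Proof.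
transitivity (\sum_(k : 'I_K) 1)%N; last by rewrite sum1_card card_ord.
under eq_bigr do rewrite -sum1_card big_mkcond /=.
rewrite -sum1_card [X in (_ + X)%N]big_mkcond exchange_big -big_split /=.
apply: eq_bigr => k _; under eq_bigr do rewrite inE.
rewrite inE; case: (s k) => [b|] /=; last by rewrite big1.
rewrite (bigD1 b) //= eqxx big1 // => a ab.
by rewrite (inj_eq (@Some_inj _)) eq_sym (negbTE ab).
Qed.

Lemma exists_channel_with_room s :
  (\sum_a fstar a)%N = K -> ~~ all_fixed s ->
  exists k0 a0, k0 \in unfixed s /\ (#|fixed_on s a0| < fstar a0)%N.
Proof.
move=> sum_fstar; rewrite negb_forall => /existsP [k0]; rewrite negbK => sk0.
exists k0; case: (boolP [exists a, #|fixed_on s a| < fstar a]%N).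
  by case/existsP=> a0 room; exists a0; rewrite inE.
rewrite negb_exists => /forallP full.
have : (\sum_a fstar a <= \sum_a #|fixed_on s a|)%N.
  by apply: leq_sum => a _; rewrite leqNgt full.
have : (0 < #|unfixed s|)%N by apply/card_gt0P; exists k0; rewrite inE.
by have := sum_card_fixed_on s; lia.
Qed.

Lemma unfixed_step_lone s k0 a0 c :
  k0 \in unfixed s -> (#|fixed_on s a0| < fstar a0)%N ->
  c \in lone_draws k0 a0 -> (#|unfixed (step fstar s c)| < #|unfixed s|)%N.
Proof.
rewrite inE => /eqP sk0 room; rewrite inE => /forallP lone.
have ck0 : c k0 = a0 by apply/eqP; rewrite (eqP (lone k0)).
have load_a0 : (load s c a0 <= #|k0 |: fixed_on s a0|)%N.
  apply/subset_leq_card/fintype.subsetP => k; rewrite !inE /pos.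
  case: (s k) => [b /eqP ->|]; first by rewrite eqxx orbT.
  by rewrite (eqP (lone k)) => ->.
have fixes_k0 : (load s c a0 <= fstar a0)%N.
  by apply: leq_trans load_a0 _; rewrite cardsU1; case: (_ \notin _); lia.
rewrite (cardsD1 k0 (unfixed s)) inE sk0 eqxx add1n ltnS.
apply/subset_leq_card/fintype.subsetP => k; rewrite !inE /step ffunE.
case: (s k) => [b|] //; case: ifP => // + _; rewrite andbT.
by apply: contraFneq => ->; rewrite ck0.
Qed.

Lemma sum_unfixed_step s :
  (\sum_a fstar a)%N = K -> ~~ all_fixed s ->
  (\sum_(c : draw K M) #|unfixed (step fstar s c)| + M.-1 ^ K.-1
     <= M ^ K * #|unfixed s|)%N.
Proof.
move=> sum_fstar /(exists_channel_with_room sum_fstar) [k0 [a0 [unf_k0 room]]].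
have -> : (M ^ K = #|{: draw K M}|)%N by rewrite card_ffun !card_ord.
rewrite -(card_lone_draws k0 a0) -sum1_card [X in (_ + X)%N]big_mkcond /=.
rewrite -sum_nat_const -big_split /=.
apply: leq_sum => c _; case: (boolP (c \in lone_draws k0 a0)) => lone.
  by rewrite addn1; exact: unfixed_step_lone unf_k0 room lone.
by rewrite addn0; exact/subset_leq_card/unfixed_step_sub.
Qed.

Lemma slot_regret_le (R : realFieldType) (mu : 'I_M -> nat -> R)
    (s : state K M) (c : draw K M) :
  (forall a n, 0 <= mu a n <= 1) -> (\sum_a fstar a)%N = K ->
  slot_regret mu fstar s c <= K%:R.
Proof.
move=> mu01 sum_fstar; rewrite /slot_regret /opt_reward.
have opt_le : \sum_a (fstar a)%:R * mu a (fstar a) <= K%:R.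
  rewrite -sum_fstar natr_sum; apply: ler_sum => a _.
  by apply: ler_piMr => //; case/andP: (mu01 a (fstar a)).
have reward_ge0 : 0 <= \sum_a (load s c a)%:R * mu a (load s c a).
  apply: sumr_ge0 => a _; apply: mulr_ge0 => //.
  by case/andP: (mu01 a (load s c a)).
lra.
Qed.

Lemma exp_regret_le_unfixed (R : realFieldType) (mu : 'I_M -> nat -> R) :
  (2 <= M)%N -> (forall a n, 0 <= mu a n <= 1) -> (\sum_a fstar a)%N = K ->
  forall N s, within_quota s ->
  exp_regret mu fstar N s
    <= K%:R * #|unfixed s|%:R * (M%:R ^+ K / M.-1%:R ^+ K.-1).
Proof.
move=> M_ge2 mu01 sum_fstar.
set Q : R := M%:R ^+ K / M.-1%:R ^+ K.-1.
have M_gt0 : 0 < M%:R :> R by rewrite ltr0n; lia.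
have M1_gt0 : 0 < M.-1%:R :> R by rewrite ltr0n; lia.
have MK_gt0 : 0 < M%:R ^+ K :> R by exact: exprn_gt0.
have KQ_ge0 : 0 <= K%:R * Q by rewrite mulr_ge0 // divr_ge0 // exprn_ge0 // ltW.
have bound_ge0 (s : state K M) : 0 <= K%:R * #|unfixed s|%:R * Q.
  by rewrite mulrAC; exact: mulr_ge0 KQ_ge0 (ler0n _ _).
elim=> [|N IH] s quota_s /=; first exact: bound_ge0.
case: ifP => [_|/negbT unfixed_s]; first exact: bound_ge0.
have slot_le c : slot_regret mu fstar s c + exp_regret mu fstar N (step fstar s c)
    <= K%:R + K%:R * Q * #|unfixed (step fstar s c)|%:R.
  rewrite mulrAC; apply: lerD; first exact: slot_regret_le.
  exact/IH/within_quota_step.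
apply: le_trans (ler_wpM2l _ (ler_sum _ (fun c _ => slot_le c))) _.
  by rewrite invr_ge0 ltW.
rewrite big_split sumr_const card_ffun !card_ord -mulr_sumr -natr_sum /=.
have := sum_unfixed_step sum_fstar unfixed_s.
rewrite -(ler_nat R) natrD !natrM !natrX -lerBrDr => sum_le.
rewrite ler_pdivrMl //.
apply: le_trans (lerD (lexx _) (ler_wpM2l KQ_ge0 sum_le)) _.
rewrite le_eqVlt; apply/orP; left; apply/eqP.
rewrite /Q -[_ *+ (M ^ K)%N]mulr_natr natrX; field.
by rewrite expf_neq0 // gt_eqF.
Qed.

End FixingPhase.

Lemma exprn_le_expR (R : realType) (x : R) k :
  0 <= 1 + x -> (1 + x) ^+ k <= expR (k%:R * x).
Proof. by move=> x_ge; rewrite expRM_natl lerXn2r ?nnegrE ?expR_ge0 ?expR_ge1Dx. Qed.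

Theorem lemma3 (R : realType) (K M : nat) (mu : 'I_M -> nat -> R)
  (fstar : 'I_M -> nat)
  (HM : (2 <= M)%N)
  (Hmu : forall a n, 0 <= mu a n <= 1)
  (Hsum : (\sum_(a < M) fstar a)%N = K)
  (Hopt : forall f : 'I_M -> nat, (\sum_(a < M) f a)%N = K ->
     \sum_(a < M) (f a)%:R * mu a (f a) <= \sum_(a < M) (fstar a)%:R * mu a (fstar a)) :
  forall N : nat,
    exp_regret mu fstar N (init_state K M)
      <= (K%:R ^+ 2) * M%:R * expR ((K%:R - 1) / (M%:R - 1)).
Proof.
(* Only the total [\sum_a fstar a = K] matters, not the optimality [Hopt]. *)
move=> N.
have := exp_regret_le_unfixed HM Hmu Hsum N (within_quota_init K fstar).
rewrite unfixed_init cardsT card_ord => /le_trans; apply.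
case: K {Hsum Hopt} => [|k]; first by rewrite !mul0r expr0n.
have [m ->] : exists m, M = m.+2 by exists M.-2; lia.
have m1_gt0 : 0 < m.+1%:R :> R by rewrite ltr0n.
have -> : k.+1%:R - 1 = k%:R :> R by rewrite -natr1 addrK.
have -> : m.+2%:R - 1 = m.+1%:R :> R by rewrite -natr1 addrK.
rewrite /= expr2 -!mulrA !ler_wpM2l // exprS -mulrA ler_wpM2l // -expr_div_n.
have -> : m.+2%:R / m.+1%:R = 1 + m.+1%:R^-1 :> R.
  by rewrite -natr1 mulrDl divff ?gt_eqF ?mul1r.
by rewrite exprn_le_expR // addr_ge0 ?invr_ge0 ?ltW.
Qed.
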